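(* Let $\alpha>0$ and let $m_\alpha(a,b)$ be a polynomial in two variables satisfying $|m_\alpha(a,b)-\max(a,b)|\le 2^{-\alpha}$ for all $a,b\in[0,1]$. For $n\in\mathbb{N}$ define polynomials $M_{\alpha,n}(x_1,\dots,x_n)$ recursively by $M_{\alpha,1}(x_1)=x_1$, $$M_{\alpha,2k}(x_1,\dots,x_{2k})=m_\alpha\big(M_{\alpha,k}(x_1,\dots,x_k),\,M_{\alpha,k}(x_{k+1},\dots,x_{2k})\big),$$ $$M_{\alpha,2k+1}(x_1,\dots,x_{2k+1})=m_\alpha\big(M_{\alpha,k}(x_1,\dots,x_k),\,M_{\alpha,k+1}(x_{k+1},\dots,x_{2k+1})\big)$$ for $k\ge1$. Then for every $n\in\mathbb{N}$, $$|M_{\alpha,n}(x_1,\dots,x_n)-\max(x_1,\dots,x_n)|\le 2^{-\alpha}\lceil\log_2 n\rceil$$ for all $x_1,\dots,x_n\in\big[(\lceil\log_2 n\rceil-1)2^{-\alpha},\,1-(\lceil\log_2 n\rceil-1)2^{-\alpha}\big]$. *)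

From HB Require Import structures.
From mathcomp Require Import all_boot all_order all_algebra.
From mathcomp Require Import all_classical all_reals all_analysis.
Set Implicit Arguments. Unset Strict Implicit. Unset Printing Implicit Defensive.
Import Order.TTheory GRing.Theory Num.Theory.
Local Open Scope ring_scope.

(* A polynomial in two variables a, b over R, represented as {poly {poly R}}:
   the inner variable is a, the outer one is b. *)
Definition eval2 (R : ringType) (p : {poly {poly R}}) (a b : R) : R :=
  (p.[b%:P]).[a].

(* Recursive construction M_{alpha,n} on a sequence of length n:
   split into the first floor(n/2) and last ceil(n/2) entries. Fuel = size. *)
Fixpoint Mfuel (R : ringType) (m : {poly {poly R}}) (fuel : nat) (s : seq R) : R :=
  match fuel with
  | 0 => head 0 s
  | f.+1 =>
      if (size s <= 1)%N then head 0 s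
      else let k := ((size s)./2)%N in
           eval2 m (Mfuel m f (take k s)) (Mfuel m f (drop k s))
  end.

Definition Mpoly (R : ringType) (m : {poly {poly R}}) (s : seq R) : R :=
  Mfuel m (size s) s.

Definition maxseq (R : realDomainType) (s : seq R) : R :=
  foldr Num.max (head 0 s) s.

(* Induction on k, for sequences of length at most 2^k: both halves have length
   at most 2^(k-1), so each is computed within (k-1) e of its maximum; as max is
   1-Lipschitz and m is within e of max on [0,1]^2, the whole sequence is then
   computed within k e.  The margin (k-1) e imposed on the entries is exactly
   what keeps the two approximate half-maxima inside [0,1]. *)
From HB Require Import structures.
From mathcomp Require Import all_boot all_order all_algebra.
From mathcomp Require Import all_classical all_reals all_analysis.
From mathcomp Require Import lra zify.
Import Order.TTheory GRing.Theory Num.Theory.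
Local Open Scope ring_scope.

Section MaxSeq.
Variable R : realDomainType.

Lemma foldr_max_ub (y x : R) (s : seq R) : x \in s -> x <= foldr Num.max y s.
Proof.
elim: s => [|z s IHs] //=; rewrite in_cons le_max => /orP[/eqP->|/IHs->].
  by rewrite lexx.
by rewrite orbT.
Qed.

Lemma foldr_max_mem (y : R) (s : seq R) : foldr Num.max y s \in y :: s.
Proof.
elim: s => [|z s IHs] /=; first exact: mem_head.
case: leP => _; last by rewrite !inE eqxx orbT.
by move: IHs; rewrite !inE => /orP[->|->]; rewrite ?orbT.
Qed.

Lemma maxseq_ub (s : seq R) x : x \in s -> x <= maxseq s.
Proof. exact: foldr_max_ub. Qed.

Lemma maxseq_mem (s : seq R) : (0 < size s)%N -> maxseq s \in s.
Proof.
case: s => [//|z s] _; have := foldr_max_mem z (z :: s).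
by rewrite /maxseq /= inE => /orP[/eqP->|]; rewrite ?mem_head.
Qed.

Lemma maxseq_cat (s1 s2 : seq R) : (0 < size s1)%N -> (0 < size s2)%N ->
  maxseq (s1 ++ s2) = Num.max (maxseq s1) (maxseq s2).
Proof.
move=> s1_gt0 s2_gt0; apply/eqP; rewrite eq_le ge_max.
have : maxseq (s1 ++ s2) \in s1 ++ s2.
  by apply: maxseq_mem; rewrite size_cat addn_gt0 s1_gt0.
rewrite mem_cat le_max => /orP[/maxseq_ub->|/maxseq_ub->]; rewrite ?orbT /=;
  by rewrite !maxseq_ub // mem_cat maxseq_mem ?orbT.
Qed.

Lemma dist_max_le (a b A B d : R) :
  `|a - A| <= d -> `|b - B| <= d -> `|Num.max a b - Num.max A B| <= d.
Proof.
rewrite !ler_norml => /andP[? ?] /andP[? ?].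
by case: (leP a b); case: (leP A B) => *; apply/andP; split; lra.
Qed.

End MaxSeq.
Arguments maxseq_mem {R s}.

Lemma half_split_sizes (n k : nat) : (1 < n <= 2 ^ k.+1)%N ->
  [/\ (0 < n./2 < n)%N, (n./2 <= 2 ^ k)%N, (0 < n - n./2 < n)%N
    & (n - n./2 <= 2 ^ k)%N].
Proof.
have := odd_double_half n; rewrite -addnn expnS.
by case: (odd n) => /= n_eq n_range; split; lia.
Qed.

Section ApproxMax.
Variables (R : realType) (e : R) (m : {poly {poly R}}).
Hypothesis e_ge0 : 0 <= e.
Hypothesis m_approx_max : forall a b : R, 0 <= a <= 1 -> 0 <= b <= 1 ->
  `|eval2 m a b - Num.max a b| <= e.

Lemma eval2_approx_max (a b A B d : R) :
  d <= A <= 1 - d -> d <= B <= 1 - d -> `|a - A| <= d -> `|b - B| <= d ->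
  `|eval2 m a b - Num.max A B| <= d + e.
Proof.
move=> A_in B_in aA bB.
have in01 x X : d <= X <= 1 - d -> `|x - X| <= d -> 0 <= x <= 1.
  by rewrite ler_norml => /andP[? ?] /andP[? ?]; apply/andP; split; lra.
apply: le_trans (ler_distD (Num.max a b) _ _) _; rewrite [d + e]addrC.
apply: lerD; last exact: dist_max_le.
by apply: m_approx_max; [apply: (in01 a A) | apply: (in01 b B)].
Qed.

Lemma Mfuel_approx_maxseq f k (s : seq R) :
  (0 < size s)%N -> (size s <= f)%N -> (size s <= 2 ^ k)%N ->
  {in s, forall x, (k%:R - 1) * e <= x <= 1 - (k%:R - 1) * e} ->
  `|Mfuel m f s - maxseq s| <= e * k%:R.
Proof.
elim: f k s => [|f IHf] k s s_gt0 s_le_f s_le_2k s_in.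
  by move: s_gt0 s_le_f; case: (size s).
rewrite /=; case: leqP => [s_le1 | s_gt1].
  case: s s_gt0 s_le1 {s_le_f s_le_2k s_in} => [//|z [|//]] _ _.
  by rewrite /maxseq /= maxxx subrr normr0 mulr_ge0.
case: k s_le_2k s_in => [|k] s_le_2k s_in; first by move: s_le_2k; lia.
set h := (size s)./2.
have [] := @half_split_sizes (size s) k ltac:(lia).
rewrite -/h => /andP[h_gt0 h_lt] h_le /andP[d_gt0 d_lt] d_le.
have size_take_h : size (take h s) = h by rewrite size_takel // ltnW.
have size_drop_h : size (drop h s) = (size s - h)%N by rewrite size_drop.
have in_k (t : seq R) : {subset t <= s} ->
    {in t, forall x, (k%:R - 1) * e <= x <= 1 - (k%:R - 1) * e}.
  have ke : (k%:R - 1) * e <= k%:R * e by rewrite mulrBl mul1r gerBl.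
  by move=> ts x /ts/s_in; rewrite -natr1 addrK => /andP[? ?]; apply/andP; split; lra.
have max_in (t : seq R) : (0 < size t)%N -> {subset t <= s} ->
    e * k%:R <= maxseq t <= 1 - e * k%:R.
  by move=> t_gt0 ts; have /ts/s_in := maxseq_mem t_gt0; rewrite -natr1 addrK mulrC.
have take_sub : {subset take h s <= s} by move=> x /mem_take.
have drop_sub : {subset drop h s <= s} by move=> x /mem_drop.
rewrite -[in maxseq s](cat_take_drop h s) maxseq_cat ?size_take_h ?size_drop_h //.
rewrite -natr1 mulrDr mulr1; apply: eval2_approx_max.
- by apply: max_in; rewrite ?size_take_h.
- by apply: max_in; rewrite ?size_drop_h.
- by apply: IHf (in_k _ take_sub); rewrite size_take_h //; lia.
- by apply: IHf (in_k _ drop_sub); rewrite size_drop_h //; lia.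
Qed.

End ApproxMax.

Theorem theorem2 (R : realType) (alpha : R) (halpha : 0 < alpha)
  (m : {poly {poly R}})
  (hm : forall a b : R, 0 <= a <= 1 -> 0 <= b <= 1 ->
          `|eval2 m a b - Num.max a b| <= 2 `^ (- alpha))
  (n : nat) (hn : (0 < n)%N) (x : 'I_n -> R)
  (hx : forall i : 'I_n,
          ((up_log 2 n)%:R - 1) * 2 `^ (- alpha) <= x i <=
          1 - ((up_log 2 n)%:R - 1) * 2 `^ (- alpha)) :
  `|Mpoly m [seq x i | i <- enum 'I_n] - maxseq [seq x i | i <- enum 'I_n]|
    <= 2 `^ (- alpha) * (up_log 2 n)%:R.
Proof.
have size_xs : size [seq x i | i <- enum 'I_n] = n.
  by rewrite size_map size_enum_ord.
rewrite /Mpoly; apply: (@Mfuel_approx_maxseq _ _ _ (powR_ge0 _ _) hm).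
- by rewrite size_xs.
- exact: leqnn.
- by rewrite size_xs; apply: up_logP.
- by move=> _ /mapP[i _ ->].
Qed.
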